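(* Let $T$ be a finite tree endowed with a partial domino tiling, $\mathbb{K}$ a field, and $\boldsymbol{\alpha}=(\alpha_t)_{t\in T}$ a family of invertible elements of $\mathbb{K}$. Then $X_T(\boldsymbol{\alpha})$ is isomorphic to $X_T(\boldsymbol{\beta})$ for some family $\boldsymbol{\beta}=(\beta_t)_{t\in T}$ of invertible elements of $\mathbb{K}$ such that $\beta_s=1$ for every vertex $s$ covered by a domino.
   Context: For a finite tree $T$ write $s-t$ when vertices $s,t$ are adjacent. For a family $\boldsymbol{\alpha}=(\alpha_t)_{t\in T}$ of elements of a field $\mathbb{K}$, $X_T(\boldsymbol{\alpha})$ denotes the affine scheme over $\mathbb{K}$ with coordinates $x_t,x'_t$ ($t\in T$) defined by $x_t x'_t = 1+\alpha_t\prod_{s-t} x_s$ for all vertices $t$. A partial domino tiling of $T$ is a subset of the edges such that every vertex is an end of at most one chosen edge (domino); a vertex is covered if it is an end of a chosen edge. *)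

From HB Require Import structures.
From mathcomp Require Import all_boot all_order all_algebra.
From mathcomp Require Import mpoly.
Set Implicit Arguments.
Unset Strict Implicit.
Unset Printing Implicit Defensive.
Import GRing.Theory.
Local Open Scope ring_scope.

Definition simple_graph (T : finType) (e : rel T) : Prop :=
  ssrbool.symmetric e /\ ssrbool.irreflexive e.

Definition is_tree (T : finType) (e : rel T) : Prop :=
  [/\ simple_graph e,
      (forall x y : T, connect e x y) &
      (forall s : seq T, uniq s -> (2 < size s)%N -> ~~ cycle e s)].

Definition is_edge (T : finType) (e : rel T) (d : {set T}) : Prop :=
  exists s t, [/\ e s t & d = [set s; t]].

Definition partial_domino_tiling (T : finType) (e : rel T) (D : {set {set T}}) : Prop :=
  (forall d, d \in D -> is_edge e d) /\
  (forall d1 d2 s, d1 \in D -> d2 \in D -> s \in d1 -> s \in d2 -> d1 = d2).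

Definition covered (T : finType) (D : {set {set T}}) (s : T) : Prop :=
  exists2 d, d \in D & s \in d.

(* variables x_t, x'_t, t in T, numbered in 'I_(#|T| + #|T|) *)
Definition nvar (T : finType) := (#|T| + #|T|)%N.
Definition xv (T : finType) (t : T) : 'I_(nvar T) := lshift #|T| (enum_rank t).
Definition xv' (T : finType) (t : T) : 'I_(nvar T) := rshift #|T| (enum_rank t).

Definition polyT (K : fieldType) (T : finType) := {mpoly K[nvar T]}.

Definition rel_XT (K : fieldType) (T : finType) (e : rel T) (alpha : T -> K) (t : T)
  : polyT K T :=
  'X_(xv t) * 'X_(xv' t) - (1 + alpha t *: \prod_(s | e s t) 'X_(xv s)).

Definition in_ideal_XT (K : fieldType) (T : finType) (e : rel T) (alpha : T -> K)
  (p : polyT K T) : Prop :=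
  exists c : T -> polyT K T, p = \sum_(t : T) c t * rel_XT e alpha t.

(* K-algebra morphism K[x]/I_alpha -> K[x]/I_beta given by the images
   f i (polynomials) of the generators: well defined iff every relation
   of I_alpha maps into I_beta *)
Definition subst (K : fieldType) (T : finType) (f : 'I_(nvar T) -> polyT K T)
  (p : polyT K T) : polyT K T :=
  comp_mpoly [tuple f i | i < nvar T] p.

Definition alg_hom_XT (K : fieldType) (T : finType) (e : rel T) (alpha beta : T -> K)
  (f : 'I_(nvar T) -> polyT K T) : Prop :=
  forall t, in_ideal_XT e beta (subst f (rel_XT e alpha t)).

(* X_T(alpha) and X_T(beta) are isomorphic as affine K-schemes, i.e. their
   coordinate K-algebras K[x,x']/I_alpha and K[x,x']/I_beta are isomorphic *)
Definition XT_isomorphic (K : fieldType) (T : finType) (e : rel T) (alpha beta : T -> K)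
  : Prop :=
  exists f g : 'I_(nvar T) -> polyT K T,
    [/\ alg_hom_XT e alpha beta f,
        alg_hom_XT e beta alpha g,
        (forall i, in_ideal_XT e alpha (subst g (f i) - 'X_i)) &
        (forall i, in_ideal_XT e beta (subst f (g i) - 'X_i))].

From HB Require Import structures.
From mathcomp Require Import all_boot all_order all_algebra.
From mathcomp Require Import mpoly.
Set Implicit Arguments.
Unset Strict Implicit.
Unset Printing Implicit Defensive.
Import GRing.Theory.
Local Open Scope ring_scope.

(* Rescaling x_t by lam_t and x'_t by lam_t^-1 (all lam_t nonzero) is an automorphism of
   the polynomial ring that sends the relation of X_T(alpha) at t to the relation of
   X_T(beta) at t, where beta_t = alpha_t * prod_{s - t} lam_s.  So it suffices to choose
   lam with prod_{s - t} lam_s = alpha_t^-1 at every covered vertex t.  Taking lam_s = 1 at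
   uncovered s, this is a multiplicative linear system on the covered vertices, which
   span a forest with a perfect matching.  Such a forest has a vertex l with at most one
   neighbour in it, necessarily its partner m; the equation at l fixes lam_m, the one at m
   fixes lam_l, and the remaining equations form a system of the same kind on the forest
   with l and m removed. *)

Section Rescaling.
Variables (K : fieldType) (T : finType) (e : rel T).

Definition rescale_coef (lam : T -> K) (i : 'I_(nvar T)) : K :=
  match split i with inl j => lam (enum_val j) | inr j => (lam (enum_val j))^-1 end.

Definition rescale (lam : T -> K) (i : 'I_(nvar T)) : polyT K T :=
  rescale_coef lam i *: 'X_i.

Lemma subst_X (f : 'I_(nvar T) -> polyT K T) i : subst f 'X_i = f i.
Proof. by rewrite /subst comp_mpolyXU -tnth_nth tnth_mktuple. Qed.

Lemma rescale_coef_xv lam t : rescale_coef lam (xv t) = lam t.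
Proof. by rewrite /rescale_coef /xv -/(unsplit (inl _)) unsplitK enum_rankK. Qed.

Lemma rescale_coef_xv' lam t : rescale_coef lam (xv' t) = (lam t)^-1.
Proof. by rewrite /rescale_coef /xv' -/(unsplit (inr _)) unsplitK enum_rankK. Qed.

Lemma subst_rescale_rel_XT lam alpha t : (forall u, lam u != 0) ->
  subst (rescale lam) (rel_XT e alpha t) =
  rel_XT e (fun t => alpha t * \prod_(s | e s t) lam s) t.
Proof.
move=> lam_nz; rewrite /rel_XT /subst rmorphB rmorphD rmorph1 /= comp_mpolyZ.
rewrite rmorphM rmorph_prod /= -!/(subst _ _) !subst_X /rescale.
rewrite rescale_coef_xv rescale_coef_xv' -scalerAr -scalerAl scalerA mulVf // scale1r.
under eq_bigr => s _ do rewrite -/(subst _ _) subst_X /rescale rescale_coef_xv.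
by rewrite scaler_prod scalerA.
Qed.

Lemma subst_rescaleK lam mu i : (forall u, mu u * lam u = 1) ->
  subst (rescale mu) (rescale lam i) = 'X_i.
Proof.
move=> mu_lam; rewrite /rescale /subst comp_mpolyZ -/(subst _ _) subst_X /rescale.
rewrite scalerA /rescale_coef; case: split => j; first by rewrite mulrC mu_lam scale1r.
by rewrite -invfM mulrC mu_lam invr1 scale1r.
Qed.

Lemma in_ideal_XT_rel (alpha : T -> K) t : in_ideal_XT e alpha (rel_XT e alpha t).
Proof.
exists (fun u => (u == t)%:R).
by rewrite (bigD1 t) //= eqxx mul1r big1 ?addr0 // => u /negbTE->; rewrite mul0r.
Qed.

Lemma in_ideal_XT0 (alpha : T -> K) : in_ideal_XT e alpha 0.
Proof. by exists (fun _ => 0); rewrite big1 // => u _; rewrite mul0r. Qed.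

Lemma XT_isomorphic_rescale (alpha lam : T -> K) : (forall u, lam u != 0) ->
  XT_isomorphic e alpha (fun t => alpha t * \prod_(s | e s t) lam s).
Proof.
move=> lam_nz; have lamV_nz u : (lam u)^-1 != 0 by rewrite invr_eq0.
exists (rescale lam), (rescale (fun u => (lam u)^-1)); split => [t|t|i|i].
- by rewrite subst_rescale_rel_XT //; apply: in_ideal_XT_rel.
- rewrite subst_rescale_rel_XT // {1}/rel_XT /= prodfV -mulrA mulfV ?mulr1.
    exact: in_ideal_XT_rel.
  by apply/prodf_neq0.
- by rewrite subst_rescaleK ?subrr => [|u]; [apply: in_ideal_XT0 | rewrite mulVf].
- by rewrite subst_rescaleK ?subrr => [|u]; [apply: in_ideal_XT0 | rewrite mulfV].
Qed.

End Rescaling.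

Section Forest.
Variables (T : finType) (e : rel T).
Hypothesis e_sym : ssrbool.symmetric e.
Hypothesis e_irr : ssrbool.irreflexive e.
Hypothesis acyclic : forall s : seq T, uniq s -> (2 < size s)%N -> ~~ cycle e s.

Lemma acyclic_path_fresh z y r w : uniq (z :: y :: r) -> path e z (y :: r) ->
  e w z -> w != y -> w \notin z :: y :: r.
Proof.
move=> zyr_uniq zyr_path ewz wNy; rewrite !inE !negb_or wNy /=.
apply/andP; split; first by apply: contraTneq ewz => ->; rewrite e_irr.
apply/negP=> /splitPr zyr_split; case: zyr_split zyr_uniq zyr_path => r1 r2.
rewrite -cat_rcons -!cat_cons cat_uniq cat_path => /andP[cyc_uniq _] /andP[cyc_path _].
have: cycle e (z :: y :: rcons r1 w).
  by rewrite /cycle rcons_path cyc_path /= last_rcons.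
by apply/negP; apply: acyclic; rewrite //= size_rcons.
Qed.

Lemma acyclic_leaf (S : {set T}) l0 : l0 \in S ->
  exists2 l, l \in S & forall u v, u \in S -> v \in S -> e u l -> e v l -> u = v.
Proof.
move=> l0S.
have [/exists_inP[l lS /forall_inP l_leaf]|/exists_inPn no_leaf] :=
  boolP [exists l in S, [forall u in S, [forall v in S, e u l ==> e v l ==> (u == v)]]].
  exists l => // u v uS vS eul evl.
  by apply/eqP; move/forall_inP: (l_leaf u uS) => /(_ v vS); rewrite eul evl.
have other_nb z y : z \in S -> exists2 w, w \in S & e w z && (w != y).
  move=> zS; have /forall_inPn[u uS /forall_inPn[v vS]] := no_leaf z zS.
  rewrite !negb_imply => /and3P[euz evz uNv].
  have [uy|uNy] := eqVneq u y; last by exists u; rewrite ?euz.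
  by exists v; rewrite // evz; apply: contra uNv => /eqP->; rewrite uy.
have long_path k : exists z y r,
    [/\ z \in S, uniq (z :: y :: r), path e z (y :: r) & size r = k].
  elim: k => [|k [z [y [r [zS zyr_uniq zyr_path zyr_size]]]]].
    have [w wS /andP[ewl0 wNl0]] := other_nb l0 l0 l0S.
    by exists w, l0, [::]; rewrite /= inE wNl0 ewl0.
  have [w wS /andP[ewz wNy]] := other_nb z y zS.
  have w_fresh := acyclic_path_fresh zyr_uniq zyr_path ewz wNy.
  exists w, z, (y :: r); split => //; first by rewrite cons_uniq w_fresh.
    by rewrite [path _ _ _]/= ewz.
  by rewrite /= zyr_size.
have [z [y [r [_ /card_uniqP zyr_card _ r_size]]]] := long_path #|T|.
by have := max_card (mem (z :: y :: r)); rewrite zyr_card /= r_size ltnNge leqnSn.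
Qed.

Lemma prod_neighbours_setD2 (R : comRingType) (F : T -> R) (S : {set T}) l m s :
  l \in S -> m \in S :\ l ->
  \prod_(u in S | e u s) F u = (if e l s then F l else 1) *
    (if e m s then F m else 1) * \prod_(u in S :\ l :\ m | e u s) F u.
Proof. by move=> lS mS; rewrite !big_mkcondr (big_setD1 l) // (big_setD1 m) //= mulrA. Qed.

Variables (K : fieldType) (M : rel T).
Hypothesis M_edge : forall a b, M a b -> e a b.
Hypothesis M_sym : forall a b, M a b -> M b a.
Hypothesis M_uniq : forall a b c, M a b -> M a c -> b = c.

Lemma solve_neighbour_prod (S : {set T}) (c : T -> K) :
  (forall s, c s != 0) -> (forall s, s \in S -> exists2 m, m \in S & M s m) ->
  exists2 lam : T -> K, (forall u, lam u != 0) &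
    forall s, s \in S -> \prod_(u in S | e u s) lam u = c s.
Proof.
move: c; have [n] := ubnP #|S|; elim: n S => // n IH S S_lt c c_nz S_matched.
have [->|[l0 l0S]] := set_0Vmem S.
  by exists (fun=> 1) => [u|s]; rewrite ?oner_neq0 ?inE.
have [l lS l_leaf] := acyclic_leaf l0S.
have [m mS Mlm] := S_matched l lS.
have elm := M_edge Mlm.
have eml : e m l by rewrite e_sym.
have lNm : l != m by apply: contraTneq elm => ->; rewrite e_irr.
have nb_l u : u \in S -> e u l -> u = m by move=> uS eul; apply: l_leaf.
have mSl : m \in S :\ l by rewrite in_setD1 eq_sym lNm.
pose S' := S :\ l :\ m.
have S'_lt : (#|S'| < n)%N.
  rewrite -ltnS (leq_trans _ S_lt) // ltnS.
  rewrite (leq_ltn_trans (subset_leq_card (subsetDl _ _))) //.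
  by rewrite (cardsD1 l S) lS.
(* The equation at the leaf l forces lam_m = c_l, which divides the equations at the
   other neighbours of m by c_l. *)
pose c' s := if e m s then c s / c l else c s.
have c'_nz s : c' s != 0 by rewrite /c'; case: (e m s); rewrite ?mulf_neq0 ?invr_eq0.
have S'_matched s : s \in S' -> exists2 q, q \in S' & M s q.
  rewrite !in_setD1 => /and3P[sNm sNl sS].
  have [q qS Msq] := S_matched s sS; exists q => //.
  rewrite !in_setD1 qS andbT; apply/andP; split.
  - apply: contra sNl => /eqP qm; apply/eqP/esym/(M_uniq (M_sym Mlm)).
    by apply: M_sym; rewrite -qm.
  - apply: contra sNm => /eqP ql; apply/eqP/esym/(M_uniq Mlm).
    by apply: M_sym; rewrite -ql.
have [lam' lam'_nz lam'_sol] := IH S' S'_lt c' c'_nz S'_matched.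
pose P := \prod_(u in S' | e u m) lam' u.
have P_nz : P != 0 by apply/prodf_neq0.
exists (fun u => if u == m then c l else if u == l then c m / P else lam' u).
  by move=> u /=; do 2?case: ifP => _; rewrite ?mulf_neq0 ?invr_eq0.
move=> s sS; rewrite (prod_neighbours_setD2 _ s lS mSl) -/S'.
under eq_bigr => u /andP[] do
  rewrite !in_setD1 => /and3P[/negbTE-> /negbTE-> _] _.
have [->|sNl] := eqVneq s l.
  rewrite e_irr eml eqxx mul1r big1 ?mulr1 // => u /andP[].
  by rewrite !in_setD1 => /and3P[uNm _ uS] /(nb_l u uS) um; rewrite um eqxx in uNm.
have [->|sNm] := eqVneq s m.
  by rewrite elm e_irr (negbTE lNm) eqxx mulr1 divfK.
have s'S : s \in S' by rewrite !in_setD1 sNm sNl.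
have -> : e l s = false by apply: contraNF sNm => els; apply/eqP/nb_l; rewrite // e_sym.
rewrite mul1r lam'_sol // /c' eqxx.
by case: (e m s); rewrite ?mul1r // mulrC divfK.
Qed.

End Forest.

Section Dominoes.
Variables (T : finType) (e : rel T) (D : {set {set T}}).
Hypothesis e_sym : ssrbool.symmetric e.
Hypothesis e_irr : ssrbool.irreflexive e.
Hypothesis tiling : partial_domino_tiling e D.

Definition domino_partner (a b : T) : bool := (a != b) && ([set a; b] \in D).

Lemma domino_partner_sym a b : domino_partner a b -> domino_partner b a.
Proof. by rewrite /domino_partner eq_sym setUC. Qed.

Lemma domino_partner_edge a b : domino_partner a b -> e a b.
Proof.
case/andP=> aNb /tiling.1[x [y [exy abxy]]].
have: a \in [set x; y] by rewrite -abxy set21.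
have: b \in [set x; y] by rewrite -abxy set22.
rewrite !in_set2 => /orP[]/eqP bE /orP[]/eqP aE; move: aNb exy;
  by rewrite aE bE ?eqxx // => _ exy; rewrite // e_sym.
Qed.

Lemma domino_partner_uniq a b c : domino_partner a b -> domino_partner a c -> b = c.
Proof.
case/andP=> aNb abD /andP[aNc acD].
have abac : [set a; b] = [set a; c] by apply: (tiling.2 _ _ a abD acD); rewrite set21.
have: c \in [set a; b] by rewrite abac set22.
by rewrite in_set2 eq_sym (negbTE aNc) => /eqP.
Qed.

Lemma covered_domino_partner s : covered D s -> exists m, domino_partner s m.
Proof.
case=> d dD sd; have [x [y [exy dxy]]] := tiling.1 d dD.
have xNy : x != y by apply: contraTneq exy => ->; rewrite e_irr.
move: sd; rewrite dxy in_set2 => /orP[]/eqP->.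
  by exists y; rewrite /domino_partner xNy -dxy.
by exists x; rewrite /domino_partner eq_sym xNy setUC -dxy.
Qed.

End Dominoes.

Theorem mainTheorem3 (T : finType) (e : rel T) (D : {set {set T}})
  (K : fieldType) (alpha : T -> K) :
  is_tree e -> partial_domino_tiling e D ->
  (forall t, alpha t != 0) ->
  exists beta : T -> K,
    [/\ (forall t, beta t != 0),
        (forall s, covered D s -> beta s = 1) &
        XT_isomorphic e alpha beta].
Proof.
move=> [[e_sym e_irr] _ acyclic] tiling alpha_nz.
pose S := [set s | [exists m, domino_partner D s m]].
have S_matched s : s \in S -> exists2 m, m \in S & domino_partner D s m.
  rewrite inE => /existsP[m Msm]; exists m => //.
  by rewrite inE; apply/existsP; exists s; apply: domino_partner_sym.
have [lam0 lam0_nz lam0_sol] := solve_neighbour_prod e_sym e_irr acyclic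
  (domino_partner_edge e_sym tiling) (@domino_partner_sym _ D)
  (domino_partner_uniq tiling) (fun s => invr_neq0 (alpha_nz s)) S_matched.
pose lam u := if u \in S then lam0 u else 1.
have lam_nz u : lam u != 0 by rewrite /lam; case: ifP; rewrite ?oner_neq0.
exists (fun t => alpha t * \prod_(s | e s t) lam s); split => [t|s|].
- by rewrite mulf_neq0 //; apply/prodf_neq0.
- move=> /(covered_domino_partner e_irr tiling)[m Msm].
  have sS : s \in S by rewrite inE; apply/existsP; exists m.
  by rewrite -[RHS](mulfV (alpha_nz s)) -(lam0_sol s sS) big_mkcondl.
- exact: (XT_isomorphic_rescale e alpha lam_nz).
Qed.
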